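(* Consider the farthest-point-insertion procedure on a metric space $(\mathcal{M},\delta)$ with integer $k\ge 2$ (less than $|\mathcal{M}|$ if $\mathcal{M}$ is finite): choose $q_1,q_2\in\mathcal{M}$ with $\delta(q_1,q_2)=\operatorname{diam}(\mathcal{M})$, set $S_2=\{q_1,q_2\}$, and for $i=2,\dots,k-1$ let $q_{i+1}$ be any point of $\mathcal{M}$ maximizing $\delta(\cdot,S_i)$ and set $S_{i+1}=S_i\cup\{q_{i+1}\}$; output $S_k$. Let $\alpha=\inf\{GR_P:P\subset\mathcal{M},|P|=k\}$. Then $GR_{S_k}\le\rho\,\alpha$ with: (i) $\rho=2$ when $\mathcal{M}$ is continuous, compact and path connected; (ii) $\rho=\rho(k)=\dfrac{\sqrt[4]{27}\sqrt{k}}{\sqrt[4]{3}\sqrt{k}-\sqrt{2}}=\sqrt3+O(1/\sqrt{k})$ when $\mathcal{M}=[0,1]^2$ with the Euclidean metric; (iii) $\rho=3$ when $\mathcal{M}$ is the vertex set of a connected undirected graph with the shortest-path metric.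
   Context: For a metric space $(\mathcal{M},\delta)$ and a finite nonempty set $S\subset\mathcal{M}$, $\delta(x,S)=\min_{s\in S}\delta(x,s)$ and $R_S=\sup_{x\in\mathcal{M}}\delta(x,S)$; if $|S|\ge2$, $r_S=\min_{p,q\in S,\,p\ne q}\delta(p,q)/2$ and the gap ratio is $GR_S=R_S/r_S$. In the graph metric, $\delta(u,v)$ is the number of edges on a shortest $u$–$v$ path. *)

From Stdlib Require Import Reals List.
From Coquelicot Require Import Coquelicot.
Open Scope R_scope.

Section MetricDefs.
Context {T : Type} (d : T -> T -> R).

Definition is_metric : Prop :=
  (forall x y, 0 <= d x y) /\
  (forall x y, d x y = 0 <-> x = y) /\
  (forall x y, d x y = d y x) /\
  (forall x y z, d x z <= d x y + d y z).

Fixpoint dist_set (x : T) (S : list T) : R :=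
  match S with
  | nil => 0
  | s :: nil => d x s
  | s :: S' => Rmin (d x s) (dist_set x S')
  end.

Definition covering_radius (S : list T) : Rbar :=
  Rbar_lub (fun r : Rbar => exists x, r = Finite (dist_set x S)).

Definition packing_radius (S : list T) : Rbar :=
  Rbar_glb (fun r : Rbar => exists p q, In p S /\ In q S /\ p <> q /\
                                       r = Finite (d p q / 2)).

Definition gap_ratio (S : list T) : Rbar :=
  Rbar_div (covering_radius S) (packing_radius S).

Definition opt_gap_ratio (k : nat) : Rbar :=
  Rbar_glb (fun r : Rbar => exists P : list T,
              NoDup P /\ length P = k /\ r = gap_ratio P).

Definition prefix_set (q : nat -> T) (i : nat) : list T := map q (seq 1 i).

Definition farthest_insertion (k : nat) (q : nat -> T) : Prop :=
  (forall x y, d x y <= d (q 1%nat) (q 2%nat)) /\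
  (forall i, (2 <= i)%nat -> (i <= k - 1)%nat ->
     forall x, dist_set x (prefix_set q i) <= dist_set (q (S i)) (prefix_set q i)).


Definition open_set (U : T -> Prop) : Prop :=
  forall x, U x -> exists e, 0 < e /\ forall y, d x y < e -> U y.

Definition compact_space : Prop :=
  forall (I : Type) (U : I -> T -> Prop),
    (forall i, open_set (U i)) -> (forall x, exists i, U i x) ->
    exists l : list I, forall x, exists i, In i l /\ U i x.

Definition path_connected_space : Prop :=
  forall x y : T, exists gamma : R -> T,
    gamma 0 = x /\ gamma 1 = y /\
    forall t, 0 <= t <= 1 -> forall eps, 0 < eps -> exists del, 0 < del /\
      forall s, 0 <= s <= 1 -> Rabs (s - t) < del -> d (gamma s) (gamma t) < eps.

End MetricDefs.

Definition lt_card_if_finite (T : Type) (k : nat) : Prop :=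
  forall l : list T, NoDup l -> (forall x, In x l) -> (k < length l)%nat.

Definition unit_square : Type :=
  { p : R * R | 0 <= fst p <= 1 /\ 0 <= snd p <= 1 }.

Definition euclid_sq (p q : unit_square) : R :=
  sqrt ((fst (proj1_sig p) - fst (proj1_sig q)) ^ 2 +
        (snd (proj1_sig p) - snd (proj1_sig q)) ^ 2).

Definition rho_square (k : nat) : R :=
  sqrt (sqrt 27) * sqrt (INR k) / (sqrt (sqrt 3) * sqrt (INR k) - sqrt 2).

Inductive walk {V : Type} (adj : V -> V -> Prop) : nat -> V -> V -> Prop :=
  | walk_nil : forall v, walk adj 0 v v
  | walk_cons : forall n u w v, adj u w -> walk adj n w v -> walk adj (S n) u v.

Definition finite_simple_graph {V : Type} (adj : V -> V -> Prop) : Prop :=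
  (exists l : list V, forall v, In v l) /\
  (forall u v, adj u v -> adj v u) /\
  (forall v, ~ adj v v).

Definition connected_graph {V : Type} (adj : V -> V -> Prop) : Prop :=
  forall u v, exists n, walk adj n u v.

Definition shortest_path_metric {V : Type} (adj : V -> V -> Prop)
  (d : V -> V -> R) : Prop :=
  forall u v, exists n, walk adj n u v /\ (forall m, walk adj m u v -> (n <= m)%nat)
                        /\ d u v = INR n.

(* Let D be the distance from the last inserted point q_k to S_(k-1) (for k = 2,
   the diameter).  Every point lies within D of S_k, since q_k was a farthest point,
   and the points of S_k are pairwise at least D apart, since insertion distances never
   increase; hence GR(S_k) <= D / (D/2) = 2.  The corollary thus reduces to a lower
   bound L on the gap ratio of every k-point set P with rho * L >= 2, obtained from a
   point far from P near a closest pair a, b of P: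
   - in a path connected space, a point at distance d(a,b)/2 from a gives L = 1;
   - in the square, the midpoint of a, b gives L = 1; for k >= 17 a 4 x 4 grid forces
     d(a,b) <= 1/sqrt 8, and with t = d(a,b)/sqrt 3 either the circle of radius t
     around some point of P stays in the square and contains a point at distance
     >= t from P, or all of P lies within t of the boundary and the centre is at
     distance >= t from P; this gives L = 2/sqrt 3, and rho(k) >= sqrt 3, with
     rho(k) >= 2 for k <= 16;
   - in a graph, a vertex a third of the way along a shortest a-b path (or, if a and
     b are adjacent, any vertex outside P) gives L = 2/3. *)

From Stdlib Require Import Reals List Lra Lia Psatz FinFun Rgeom.
From Stdlib Require Import Classical ClassicalEpsilon ProofIrrelevance.
From Coquelicot Require Import Coquelicot.
Open Scope R_scope.

Lemma Rbar_lub_is_lub (E : Rbar -> Prop) : Rbar_is_lub E (Rbar_lub E).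
Proof. exact (proj2_sig (Rbar_ex_lub E)). Qed.

Lemma Rbar_glb_is_glb (E : Rbar -> Prop) : Rbar_is_glb E (Rbar_glb E).
Proof. exact (proj2_sig (Rbar_ex_glb E)). Qed.

Section DistSet.
Context {T : Type} (d : T -> T -> R).

Lemma dist_set_le_in x S s : In s S -> dist_set d x S <= d x s.
Proof.
  induction S as [|a [|b S] IH]; [intros []| |].
  - intros [<-|[]]; simpl; lra.
  - intros [<-|Hs]; [apply Rmin_l|].
    eapply Rle_trans; [apply Rmin_r|]. now apply IH.
Qed.

Lemma dist_set_attained x S : S <> nil -> exists s, In s S /\ dist_set d x S = d x s.
Proof.
  induction S as [|a [|b S] IH]; intros HS; [congruence| |].
  - exists a; simpl; auto.
  - change (dist_set d x (a :: b :: S)) with (Rmin (d x a) (dist_set d x (b :: S))).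
    destruct IH as [s [Hs ->]]; [congruence|].
    unfold Rmin; destruct Rle_dec.
    + exists a; simpl; auto.
    + exists s; simpl; auto.
Qed.

Lemma dist_set_ge x S r : S <> nil -> (forall s, In s S -> r <= d x s) -> r <= dist_set d x S.
Proof. intros HS H. destruct (dist_set_attained x S HS) as [s [Hs ->]]. auto. Qed.

Lemma dist_set_antimono x S S' : S <> nil -> incl S S' -> dist_set d x S' <= dist_set d x S.
Proof.
  intros HS Hincl. destruct (dist_set_attained x S HS) as [s [Hs ->]].
  apply dist_set_le_in; auto.
Qed.

Lemma covering_radius_ge x S : Rbar_le (Finite (dist_set d x S)) (covering_radius d S).
Proof. unfold covering_radius. apply Rbar_lub_is_lub. now exists x. Qed.

Lemma covering_radius_le S c : (forall x, dist_set d x S <= c) ->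
  Rbar_le (covering_radius d S) (Finite c).
Proof. intros H. unfold covering_radius. apply Rbar_lub_is_lub. intros r [x ->]. apply H. Qed.

Lemma packing_radius_le S p q : In p S -> In q S -> p <> q ->
  Rbar_le (packing_radius d S) (Finite (d p q / 2)).
Proof. intros. unfold packing_radius. apply Rbar_glb_is_glb. exists p, q. auto. Qed.

Lemma packing_radius_ge S r : (forall p q, In p S -> In q S -> p <> q -> r <= d p q / 2) ->
  Rbar_le (Finite r) (packing_radius d S).
Proof.
  intros H. unfold packing_radius. apply Rbar_glb_is_glb.
  intros ? (p & q & Hp & Hq & Hpq & ->). simpl. auto.
Qed.

End DistSet.

Lemma list_argmin {A : Type} (P : A -> Prop) (f : A -> R) (l : list A) :
  (exists a, In a l /\ P a) ->
  exists a, In a l /\ P a /\ forall b, In b l -> P b -> f a <= f b.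
Proof.
  induction l as [|a l IH]; intros [w [Hw HPw]]; [destruct Hw|].
  destruct (classic (exists b, In b l /\ P b)) as [Hl|Hl].
  - destruct (IH Hl) as [m (Hm & HPm & Hmin)].
    destruct (classic (P a /\ f a < f m)) as [Ha|Ha].
    + exists a. split; [left|]; auto. split; [tauto|].
      intros b [<-|Hb] HPb; [lra|]. pose proof (Hmin b Hb HPb). lra.
    + exists m. split; [right|]; auto. split; auto.
      intros b [<-|Hb] HPb; auto. apply Rnot_lt_le. tauto.
  - assert (HPa : P a) by (destruct Hw as [<-|Hw]; auto; exfalso; eauto).
    exists a. split; [left|]; auto. split; auto.
    intros b [<-|Hb] HPb; [lra|]. exfalso; eauto.
Qed.

Section Metric.
Context {T : Type} (d : T -> T -> R) (Hd : is_metric d).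

Lemma metric_nonneg x y : 0 <= d x y.
Proof. apply Hd. Qed.

Lemma metric_sym x y : d x y = d y x.
Proof. apply Hd. Qed.

Lemma metric_triangle x y z : d x z <= d x y + d y z.
Proof. apply Hd. Qed.

Lemma metric_diag x : d x x = 0.
Proof. now apply Hd. Qed.

Lemma metric_eq0 x y : d x y = 0 -> x = y.
Proof. apply Hd. Qed.

Lemma metric_pos x y : x <> y -> 0 < d x y.
Proof.
  intros Hxy. destruct (metric_nonneg x y) as [|E]; auto.
  exfalso. apply Hxy, metric_eq0. auto.
Qed.

Lemma dist_set_nonneg x S : S <> nil -> 0 <= dist_set d x S.
Proof. intros HS. apply dist_set_ge; auto using metric_nonneg. Qed.

Lemma dist_set_le0_In x S : S <> nil -> dist_set d x S <= 0 -> In x S.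
Proof.
  intros HS H. destruct (dist_set_attained d x S HS) as [s [Hs Hxs]].
  replace x with s; auto. symmetry. apply metric_eq0.
  pose proof (metric_nonneg x s). lra.
Qed.

Lemma gap_ratio_le S s s' c p : In s S -> In s' S -> s <> s' -> 0 < p ->
  (forall x, dist_set d x S <= c) ->
  (forall u v, In u S -> In v S -> u <> v -> p <= d u v / 2) ->
  Rbar_le (gap_ratio d S) (Finite (c / p)).
Proof.
  intros Hs Hs' Hss' Hp Hcov Hpack.
  assert (HS : S <> nil) by (intros ->; destruct Hs).
  pose proof (covering_radius_ge d s S) as Hc1.
  pose proof (covering_radius_le d S c Hcov) as Hc2.
  pose proof (packing_radius_ge d S p Hpack) as Hp1.
  pose proof (packing_radius_le d S s s' Hs Hs' Hss') as Hp2.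
  pose proof (dist_set_nonneg s S HS) as Hc0.
  unfold gap_ratio.
  destruct (covering_radius d S) as [c'| |]; try contradiction.
  destruct (packing_radius d S) as [p'| |]; try contradiction.
  simpl in *. unfold Rdiv.
  apply Rmult_le_compat; try lra.
  - left. apply Rinv_0_lt_compat. lra.
  - apply Rinv_le_contravar; lra.
Qed.

Lemma closest_pair S : NoDup S -> (2 <= length S)%nat ->
  exists a b, In a S /\ In b S /\ a <> b /\
    forall u v, In u S -> In v S -> u <> v -> d a b <= d u v.
Proof.
  intros HS Hlen.
  destruct (list_argmin (fun uv => fst uv <> snd uv) (fun uv => d (fst uv) (snd uv))
              (list_prod S S)) as [[a b] (Hab & Hne & Hmin)].
  - destruct S as [|a [|b S']]; simpl in Hlen; try lia.
    exists (a, b). split; [apply in_prod; simpl; auto|].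
    simpl. intros <-. apply NoDup_cons_iff in HS. apply HS. now left.
  - apply in_prod_iff in Hab. exists a, b. repeat split; try tauto.
    intros u v Hu Hv Huv. apply (Hmin (u, v)); auto. now apply in_prod.
Qed.

Lemma gap_ratio_ge_of_far_point S L : NoDup S -> (2 <= length S)%nat ->
  (forall a b, In a S -> In b S -> a <> b ->
     (forall u v, In u S -> In v S -> u <> v -> d a b <= d u v) ->
     exists x, L * (d a b / 2) <= dist_set d x S) ->
  Rbar_le (Finite L) (gap_ratio d S).
Proof.
  intros HS Hlen Hfar.
  destruct (closest_pair S HS Hlen) as (a & b & Ha & Hb & Hab & Hmin).
  destruct (Hfar a b Ha Hb Hab Hmin) as [x Hx].
  pose proof (metric_pos a b Hab) as Hpos.
  pose proof (packing_radius_le d S a b Ha Hb Hab) as Hp1.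
  assert (Hp2 : Rbar_le (Finite (d a b / 2)) (packing_radius d S)).
  { apply packing_radius_ge. intros u v Hu Hv Huv. pose proof (Hmin u v Hu Hv Huv). lra. }
  pose proof (covering_radius_ge d x S) as Hc.
  unfold gap_ratio.
  destruct (packing_radius d S) as [p| |]; try contradiction. simpl in Hp1, Hp2.
  replace p with (d a b / 2) by lra.
  destruct (covering_radius d S) as [c| |]; try contradiction; simpl in Hc.
  - simpl. apply Rmult_le_reg_r with (d a b / 2); [lra|].
    rewrite Rmult_assoc, Rinv_l by lra. lra.
  - unfold Rbar_div. simpl Rbar_inv. simpl Rbar_mult.
    assert (Hinv : 0 < / (d a b / 2)) by (apply Rinv_0_lt_compat; lra).
    destruct Rle_dec; [|lra].
    destruct Rle_lt_or_eq_dec; [exact I|lra].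
Qed.

Lemma gap_ratio_ge_1_of_midpoints :
  (forall a b, exists z, d a z = d a b / 2) ->
  forall S, NoDup S -> (2 <= length S)%nat -> Rbar_le (Finite 1) (gap_ratio d S).
Proof.
  intros Hmid S HS Hlen. apply gap_ratio_ge_of_far_point; auto.
  intros a b Ha Hb Hab Hmin. destruct (Hmid a b) as [z Hz].
  exists z. rewrite Rmult_1_l. apply dist_set_ge; [intros ->; destruct Ha|].
  intros s Hs. pose proof (metric_triangle a z s).
  destruct (classic (s = a)) as [->|Hsa].
  - rewrite (metric_sym z a). lra.
  - pose proof (Hmin a s Ha Hs (not_eq_sym Hsa)). lra.
Qed.

End Metric.

Lemma covering_list_length_gt (T : Type) k (l : list T) :
  lt_card_if_finite T k -> (forall x, In x l) -> (k < length l)%nat.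
Proof.
  intros Hcard Hl.
  pose (l' := nodup (fun x y : T => excluded_middle_informative (x = y)) l).
  apply Nat.lt_le_trans with (length l').
  - apply Hcard; [apply NoDup_nodup|]. intros x. apply nodup_In, Hl.
  - apply NoDup_incl_length; [apply NoDup_nodup|]. intros x. apply nodup_In.
Qed.

Lemma lt_card_not_In (T : Type) k (P : list T) :
  lt_card_if_finite T k -> length P = k -> exists v, ~ In v P.
Proof.
  intros Hcard Hlen. apply not_all_ex_not. intros Hall.
  pose proof (covering_list_length_gt T k P Hcard Hall). lia.
Qed.

Section PrefixSet.
Context {T : Type} (q : nat -> T).

Lemma In_prefix_set i j : (1 <= j <= i)%nat -> In (q j) (prefix_set q i).
Proof. intros H. apply in_map, in_seq. lia. Qed.

Lemma prefix_set_In i x : In x (prefix_set q i) -> exists j, (1 <= j <= i)%nat /\ x = q j.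
Proof.
  intros H. apply in_map_iff in H as [j [<- Hj]]. apply in_seq in Hj.
  exists j. split; [lia|auto].
Qed.

Lemma prefix_set_incl i j : (i <= j)%nat -> incl (prefix_set q i) (prefix_set q j).
Proof.
  intros H x Hx. destruct (prefix_set_In i x Hx) as [m [Hm ->]]. apply In_prefix_set. lia.
Qed.

Lemma prefix_set_nonnil i : (1 <= i)%nat -> prefix_set q i <> nil.
Proof.
  intros H E. pose proof (In_prefix_set i 1 ltac:(lia)) as H1.
  rewrite E in H1. destruct H1.
Qed.

Lemma length_prefix_set i : length (prefix_set q i) = i.
Proof. unfold prefix_set. now rewrite length_map, length_seq. Qed.

End PrefixSet.

Section FarthestInsertion.
Context {T : Type} (d : T -> T -> R) (Hd : is_metric d).
Context (k : nat) (q : nat -> T) (Hk : (2 <= k)%nat) (Hfi : farthest_insertion d k q).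

(* for [j = 2] this is the diameter condition on [q 1], [q 2] *)
Lemma farthest_insertion_farthest j x : (2 <= j <= k)%nat ->
  dist_set d x (prefix_set q (j - 1)) <= dist_set d (q j) (prefix_set q (j - 1)).
Proof.
  intros Hj. destruct Hfi as [Hdiam Hfar].
  destruct (Nat.eq_dec j 2) as [->|Hj2].
  - simpl. rewrite (metric_sym d Hd (q 2%nat)). apply Hdiam.
  - replace j with (S (j - 1)) at 2 by lia. apply Hfar; lia.
Qed.

Let D := dist_set d (q k) (prefix_set q (k - 1)).

Lemma farthest_insertion_covering x : dist_set d x (prefix_set q k) <= D.
Proof.
  eapply Rle_trans; [|apply (farthest_insertion_farthest k x); lia].
  apply dist_set_antimono; [apply prefix_set_nonnil; lia|apply prefix_set_incl; lia].
Qed.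

Lemma farthest_insertion_separated i j : (1 <= i < j)%nat -> (j <= k)%nat ->
  D <= d (q j) (q i).
Proof.
  intros Hij Hjk. unfold D.
  eapply Rle_trans with (dist_set d (q k) (prefix_set q (j - 1))).
  { apply dist_set_antimono; [apply prefix_set_nonnil; lia|apply prefix_set_incl; lia]. }
  eapply Rle_trans; [apply farthest_insertion_farthest; lia|].
  apply dist_set_le_in, In_prefix_set. lia.
Qed.

Lemma farthest_insertion_radius_pos : lt_card_if_finite T k -> 0 < D.
Proof.
  intros Hcard. apply Rnot_le_lt. intros HD.
  assert (Hall : forall x, In x (prefix_set q k)).
  { intros x. apply (dist_set_le0_In d Hd); [apply prefix_set_nonnil; lia|].
    pose proof (farthest_insertion_covering x). lra. }
  pose proof (covering_list_length_gt T k _ Hcard Hall) as H.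
  rewrite length_prefix_set in H. lia.
Qed.

Lemma farthest_insertion_gap_ratio_le_2 : lt_card_if_finite T k ->
  Rbar_le (gap_ratio d (prefix_set q k)) (Finite 2).
Proof.
  intros Hcard. pose proof (farthest_insertion_radius_pos Hcard) as HD.
  assert (Hsep : forall i j, (1 <= i <= k)%nat -> (1 <= j <= k)%nat -> i <> j ->
                  D <= d (q i) (q j)).
  { intros i j Hi Hj Hij. destruct (Nat.lt_total i j) as [Hlt|[Heq|Hlt]]; [|contradiction|].
    - rewrite (metric_sym d Hd). apply farthest_insertion_separated; lia.
    - apply farthest_insertion_separated; lia. }
  assert (H12 : q 1%nat <> q 2%nat).
  { intros E. pose proof (Hsep 1%nat 2%nat ltac:(lia) ltac:(lia) ltac:(lia)) as H.
    rewrite E, (metric_diag d Hd) in H. lra. }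
  replace 2 with (D / (D / 2)) by (field; lra).
  apply (gap_ratio_le d Hd _ (q 1%nat) (q 2%nat)); try (apply In_prefix_set; lia); auto; try lra.
  - apply farthest_insertion_covering.
  - intros u v Hu Hv Huv.
    destruct (prefix_set_In q k u Hu) as [i [Hi ->]].
    destruct (prefix_set_In q k v Hv) as [j [Hj ->]].
    assert (i <> j) by (intros ->; auto).
    pose proof (Hsep i j Hi Hj H). lra.
Qed.

End FarthestInsertion.

Lemma gap_ratio_le_mult_opt_gap_ratio {T : Type} (d : T -> T -> R) k S U L rho :
  Rbar_le (gap_ratio d S) (Finite U) ->
  (forall P, NoDup P -> length P = k -> Rbar_le (Finite L) (gap_ratio d P)) ->
  0 < rho -> U <= rho * L ->
  Rbar_le (gap_ratio d S) (Rbar_mult (Finite rho) (opt_gap_ratio d k)).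
Proof.
  intros HS Hlow Hrho HL.
  assert (Hopt : Rbar_le (Finite L) (opt_gap_ratio d k)).
  { apply Rbar_glb_is_glb. intros r (P & HP & Hk & ->). auto. }
  destruct (opt_gap_ratio d k) as [a| |]; try contradiction.
  - eapply Rbar_le_trans; [exact HS|]. simpl in *.
    apply Rle_trans with (rho * L); auto. apply Rmult_le_compat_l; lra.
  - simpl. destruct Rle_dec; [|lra]. destruct Rle_lt_or_eq_dec; [|lra].
    destruct (gap_ratio d S); exact I.
Qed.

(* extends a path defined on [0, 1] to all of R, as the IVT requires *)
Definition clamp01 (t : R) : R := Rmax 0 (Rmin 1 t).

Lemma clamp01_in t : 0 <= clamp01 t <= 1.
Proof. unfold clamp01, Rmax, Rmin. repeat destruct Rle_dec; lra. Qed.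

Lemma clamp01_id t : 0 <= t <= 1 -> clamp01 t = t.
Proof. unfold clamp01, Rmax, Rmin. repeat destruct Rle_dec; lra. Qed.

Lemma clamp01_lipschitz s t : Rabs (clamp01 s - clamp01 t) <= Rabs (s - t).
Proof.
  unfold clamp01, Rmax, Rmin. repeat destruct Rle_dec;
  unfold Rabs; repeat destruct Rcase_abs; lra.
Qed.

Section PathConnected.
Context {T : Type} (d : T -> T -> R) (Hd : is_metric d) (Hpc : path_connected_space d).

Lemma path_connected_intermediate_distance a b r : 0 <= r <= d a b ->
  exists z, d a z = r.
Proof.
  intros Hr. destruct (Hpc a b) as [g [Hg0 [Hg1 Hgcont]]].
  set (f := fun t => d a (g (clamp01 t))).
  assert (Hf : continuity f).
  { intros t eps Heps. destruct (Hgcont _ (clamp01_in t) eps Heps) as [del [Hdel Hnear]].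
    exists del. split; auto. intros s [_ Hs]. simpl in *. unfold R_dist in *.
    assert (Hgs : d (g (clamp01 s)) (g (clamp01 t)) < eps).
    { apply Hnear; [apply clamp01_in|]. eapply Rle_lt_trans; [apply clamp01_lipschitz|exact Hs]. }
    pose proof (metric_triangle d Hd a (g (clamp01 s)) (g (clamp01 t))).
    pose proof (metric_triangle d Hd a (g (clamp01 t)) (g (clamp01 s))).
    rewrite (metric_sym d Hd (g (clamp01 t))) in H0.
    unfold f. apply Rabs_def1; lra. }
  assert (Hf0 : f 0 = 0) by (unfold f; rewrite clamp01_id, Hg0 by lra; apply (metric_diag d Hd)).
  assert (Hf1 : f 1 = d a b) by (unfold f; rewrite clamp01_id, Hg1 by lra; reflexivity).
  destruct (IVT_gen f 0 1 r Hf) as [t [_ Ht]].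
  - rewrite Hf0, Hf1. unfold Rmin, Rmax. destruct Rle_dec; lra.
  - now exists (g (clamp01 t)).
Qed.

Lemma path_connected_gap_ratio_ge_1 P : NoDup P -> (2 <= length P)%nat ->
  Rbar_le (Finite 1) (gap_ratio d P).
Proof.
  apply (gap_ratio_ge_1_of_midpoints d Hd). intros a b.
  apply (path_connected_intermediate_distance a b).
  pose proof (metric_nonneg d Hd a b). lra.
Qed.

End PathConnected.

Definition sq_x (p : unit_square) : R := fst (proj1_sig p).
Definition sq_y (p : unit_square) : R := snd (proj1_sig p).

Definition sq_point (x y : R) (Hx : 0 <= x <= 1) (Hy : 0 <= y <= 1) : unit_square :=
  exist _ (x, y) (conj Hx Hy).

Lemma sq_x_in p : 0 <= sq_x p <= 1.
Proof. apply (proj2_sig p). Qed.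

Lemma sq_y_in p : 0 <= sq_y p <= 1.
Proof. apply (proj2_sig p). Qed.

Lemma euclid_sq_dist_euc p q : euclid_sq p q = dist_euc (sq_x p) (sq_y p) (sq_x q) (sq_y q).
Proof. unfold euclid_sq, dist_euc, Rsqr. f_equal. unfold sq_x, sq_y. ring. Qed.

Lemma euclid_sq_sqr p q :
  euclid_sq p q * euclid_sq p q =
  (sq_x p - sq_x q) * (sq_x p - sq_x q) + (sq_y p - sq_y q) * (sq_y p - sq_y q).
Proof.
  unfold euclid_sq. rewrite sqrt_sqrt; [unfold sq_x, sq_y; ring|].
  apply Rplus_le_le_0_compat; apply pow2_ge_0.
Qed.

Lemma euclid_sq_is_metric : is_metric euclid_sq.
Proof.
  split; [|split; [|split]]; intros.
  - apply sqrt_pos.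
  - split; intros H.
    + pose proof (euclid_sq_sqr x y) as Hs. rewrite H, Rmult_0_l in Hs.
      destruct x as [[x1 x2] Hx], y as [[y1 y2] Hy]; unfold sq_x, sq_y in Hs; simpl in Hs.
      destruct (Rplus_sqr_eq_0 (x1 - y1) (x2 - y2)) as [E1 E2]; [unfold Rsqr; lra|].
      assert (y1 = x1) as -> by lra. assert (y2 = x2) as -> by lra.
      now rewrite (proof_irrelevance _ Hx Hy).
    + subst. rewrite euclid_sq_dist_euc. apply distance_refl.
  - rewrite !euclid_sq_dist_euc. apply distance_symm.
  - rewrite !euclid_sq_dist_euc. apply triangle.
Qed.

Lemma unit_square_infinite k : lt_card_if_finite unit_square k.
Proof.
  intros l _ Hall.
  assert (Hin : forall n : nat, 0 <= / (INR n + 1) <= 1).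
  { intros n. pose proof (pos_INR n). split.
    - left. apply Rinv_0_lt_compat. lra.
    - rewrite <- Rinv_1. apply Rinv_le_contravar; lra. }
  assert (H0 : 0 <= 0 <= 1) by lra.
  set (f := fun n => sq_point _ _ (Hin n) H0).
  assert (Hinj : Injective f).
  { intros n m H. apply (f_equal sq_x) in H. simpl in H.
    pose proof (pos_INR n). pose proof (pos_INR m).
    apply Rinv_eq_reg in H. apply INR_eq. lra. }
  pose proof (NoDup_incl_length (Injective_map_NoDup Hinj (seq_NoDup (S k) 0))
                                (fun x _ => Hall x)) as H.
  rewrite length_map, length_seq in H. lia.
Qed.

Lemma euclid_sq_midpoints a b : exists z, euclid_sq a z = euclid_sq a b / 2.
Proof.
  pose proof (sq_x_in a). pose proof (sq_x_in b). pose proof (sq_y_in a). pose proof (sq_y_in b).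
  assert (Hx : 0 <= (sq_x a + sq_x b) / 2 <= 1) by lra.
  assert (Hy : 0 <= (sq_y a + sq_y b) / 2 <= 1) by lra.
  set (z := sq_point _ _ Hx Hy).
  assert (Hzx : sq_x z = (sq_x a + sq_x b) / 2) by reflexivity.
  assert (Hzy : sq_y z = (sq_y a + sq_y b) / 2) by reflexivity.
  exists z. pose proof (euclid_sq_sqr a b) as Hab. pose proof (euclid_sq_sqr a z) as Haz.
  rewrite Hzx, Hzy in Haz.
  apply Rsqr_inj; [apply sqrt_pos|unfold Rdiv; apply Rmult_le_pos; [apply sqrt_pos|lra]|].
  unfold Rsqr. rewrite Haz. nra.
Qed.

(* With A, B, C taken relative to x:
   |A-B|^2 + |A-C|^2 + |B-C|^2 = 3 (|A|^2 + |B|^2 + |C|^2) - |A+B+C|^2 < 9 r. *)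
Lemma disc_no_sqrt3_separated_triple x1 x2 a1 a2 b1 b2 c1 c2 r :
  (a1 - x1) * (a1 - x1) + (a2 - x2) * (a2 - x2) <= r ->
  (b1 - x1) * (b1 - x1) + (b2 - x2) * (b2 - x2) <= r ->
  (c1 - x1) * (c1 - x1) + (c2 - x2) * (c2 - x2) < r ->
  3 * r <= (a1 - b1) * (a1 - b1) + (a2 - b2) * (a2 - b2) ->
  3 * r <= (a1 - c1) * (a1 - c1) + (a2 - c2) * (a2 - c2) ->
  3 * r <= (b1 - c1) * (b1 - c1) + (b2 - c2) * (b2 - c2) -> False.
Proof.
  intros. pose proof (Rle_0_sqr (a1 + b1 + c1 - 3 * x1)).
  pose proof (Rle_0_sqr (a2 + b2 + c2 - 3 * x2)).
  unfold Rsqr in *. lra.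
Qed.

Section CircleEscape.
Variables (P : list unit_square) (a : unit_square) (t : R).
Hypotheses (Ht : 0 < t) (Ha : In a P).
Hypotheses (Hax : t <= sq_x a <= 1 - t) (Hay : t <= sq_y a <= 1 - t).
Hypothesis Hsep : forall p q, In p P -> In q P -> p <> q ->
  3 * (t * t) <= euclid_sq p q * euclid_sq p q.

Lemma circle_x_in th : 0 <= sq_x a + t * cos th <= 1.
Proof. pose proof (COS_bound th). nra. Qed.

Lemma circle_y_in th : 0 <= sq_y a + t * sin th <= 1.
Proof. pose proof (SIN_bound th). nra. Qed.

Let circle th := sq_point _ _ (circle_x_in th) (circle_y_in th).

Let circle_dist_sqr th s : euclid_sq s (circle th) * euclid_sq s (circle th) =
  (sq_x s - (sq_x a + t * cos th)) * (sq_x s - (sq_x a + t * cos th)) +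
  (sq_y s - (sq_y a + t * sin th)) * (sq_y s - (sq_y a + t * sin th)).
Proof. apply euclid_sq_sqr. Qed.

Lemma circle_dist_center th : euclid_sq a (circle th) = t.
Proof.
  apply Rsqr_inj; [apply sqrt_pos|lra|]. unfold Rsqr. rewrite circle_dist_sqr.
  pose proof (sin2_cos2 th). unfold Rsqr in *. nra.
Qed.

Lemma square_circle_escape : exists x, t <= dist_set euclid_sq x P.
Proof.
  pose proof euclid_sq_is_metric as Hd.
  apply NNPP. intros Hno.
  assert (Hnear : forall x, exists s, In s P /\ euclid_sq s x < t).
  { intros x. destruct (dist_set_attained euclid_sq x P) as [s [Hs Hxs]]; [intros ->; destruct Ha|].
    exists s. split; auto. rewrite (metric_sym _ Hd), <- Hxs.
    apply Rnot_le_lt. intros H. apply Hno. eauto. }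
  assert (Hsqr_lt : forall s x, euclid_sq s x < t -> euclid_sq s x * euclid_sq s x < t * t).
  { intros s x H. pose proof (metric_nonneg _ Hd s x). nra. }
  destruct (Hnear (circle 0)) as [b [Hb Hb0]].
  assert (Hab : a <> b) by (intros <-; rewrite circle_dist_center in Hb0; lra).
  pose proof (Hsep a b Ha Hb Hab) as Hab_far. rewrite euclid_sq_sqr in Hab_far.
  (* a point of the circle at distance exactly [t] from [b] *)
  set (f := fun th =>
    (sq_x b - (sq_x a + t * cos th)) * (sq_x b - (sq_x a + t * cos th)) +
    (sq_y b - (sq_y a + t * sin th)) * (sq_y b - (sq_y a + t * sin th))).
  assert (Hf : continuity f) by (unfold f; reg).
  assert (Hf0 : f 0 < t * t) by (unfold f; rewrite <- circle_dist_sqr; apply Hsqr_lt; exact Hb0).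
  assert (Hf1 : exists th1, t * t < f th1).
  { unfold f. destruct (Rle_lt_dec (sq_y a) (sq_y b)).
    - exists (3 * (PI / 2)). rewrite cos_3PI2, sin_3PI2. nra.
    - exists (PI / 2). rewrite cos_PI2, sin_PI2. nra. }
  destruct Hf1 as [th1 Hf1].
  destruct (IVT_gen f 0 th1 (t * t) Hf) as [th [_ Hth]].
  { unfold Rmin, Rmax. destruct Rle_dec; lra. }
  destruct (Hnear (circle th)) as [c [Hc Hc0]]. apply Hsqr_lt in Hc0.
  pose proof (circle_dist_center th) as Ha0.
  assert (Hac : a <> c) by (intros <-; nra).
  rewrite circle_dist_sqr in Hc0. unfold f in Hth.
  assert (Hbc : b <> c) by (intros <-; lra).
  pose proof (Hsep a c Ha Hc Hac) as Hac_far. pose proof (Hsep b c Hb Hc Hbc) as Hbc_far.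
  rewrite euclid_sq_sqr in Hac_far, Hbc_far.
  apply (disc_no_sqrt3_separated_triple (sq_x a + t * cos th) (sq_y a + t * sin th)
           (sq_x a) (sq_y a) (sq_x b) (sq_y b) (sq_x c) (sq_y c) (t * t)); auto.
  - rewrite <- circle_dist_sqr, circle_dist_center. lra.
  - lra.
Qed.

End CircleEscape.

Definition quarter (x : R) : nat :=
  if Rlt_dec x (1/4) then 0 else if Rlt_dec x (1/2) then 1 else if Rlt_dec x (3/4) then 2 else 3.

Lemma quarter_lt_4 x : (quarter x < 4)%nat.
Proof. unfold quarter. repeat destruct Rlt_dec; lia. Qed.

Lemma quarter_eq_close x y : 0 <= x <= 1 -> 0 <= y <= 1 -> quarter x = quarter y ->
  (x - y) * (x - y) <= 1/16.
Proof. intros. unfold quarter in *. repeat destruct Rlt_dec; try discriminate; nra. Qed.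

Definition square_cell (p : unit_square) : nat := (4 * quarter (sq_x p) + quarter (sq_y p))%nat.

Lemma square_pigeonhole P : NoDup P -> (17 <= length P)%nat ->
  exists p q, In p P /\ In q P /\ p <> q /\ euclid_sq p q * euclid_sq p q <= 1/8.
Proof.
  intros HP Hlen. apply NNPP. intros Hno.
  assert (Hcells : NoDup (map square_cell P)).
  { apply NoDup_map_NoDup_ForallPairs; auto.
    intros p q Hp Hq Hcell. apply NNPP. intros Hpq. apply Hno. exists p, q. repeat split; auto.
    unfold square_cell in Hcell.
    pose proof (quarter_lt_4 (sq_x p)). pose proof (quarter_lt_4 (sq_y p)).
    pose proof (quarter_lt_4 (sq_x q)). pose proof (quarter_lt_4 (sq_y q)).
    pose proof (quarter_eq_close _ _ (sq_x_in p) (sq_x_in q) ltac:(lia)).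
    pose proof (quarter_eq_close _ _ (sq_y_in p) (sq_y_in q) ltac:(lia)).
    rewrite euclid_sq_sqr. lra. }
  assert (Hincl : incl (map square_cell P) (seq 0 16)).
  { intros n Hn. apply in_map_iff in Hn as [p [<- _]]. apply in_seq.
    unfold square_cell. pose proof (quarter_lt_4 (sq_x p)). pose proof (quarter_lt_4 (sq_y p)).
    lia. }
  pose proof (NoDup_incl_length Hcells Hincl) as H.
  rewrite length_map, length_seq in H. lia.
Qed.

Lemma near_boundary_far_from_half u t : 0 <= t <= 1/4 -> ~ (t <= u <= 1 - t) ->
  t * t <= (1/2 - u) * (1/2 - u).
Proof.
  intros Ht Hu. destruct (Rlt_le_dec u t); [nra|].
  destruct (Rle_lt_dec u (1 - t)); [exfalso; auto|nra].
Qed.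

Lemma square_gap_ratio_ge_2_sqrt3 P : NoDup P -> (17 <= length P)%nat ->
  Rbar_le (Finite (2 / sqrt 3)) (gap_ratio euclid_sq P).
Proof.
  intros HP Hlen. pose proof euclid_sq_is_metric as Hd.
  apply (gap_ratio_ge_of_far_point _ Hd); [auto|lia|].
  intros a b Ha Hb Hab Hmin.
  pose proof (metric_pos _ Hd a b Hab) as Hm0. set (m := euclid_sq a b) in *.
  assert (Hm2 : m * m <= 1/8).
  { destruct (square_pigeonhole P HP Hlen) as (p & q & Hp & Hq & Hpq & Hclose).
    pose proof (Hmin p q Hp Hq Hpq).
    apply Rle_trans with (euclid_sq p q * euclid_sq p q); [apply Rmult_le_compat|]; lra. }
  pose proof (sqrt_lt_R0 3 ltac:(lra)) as Hs3. pose proof (sqrt_sqrt 3 ltac:(lra)) as Hs3sq.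
  set (t := m / sqrt 3).
  assert (Ht0 : 0 < t) by (unfold t; apply Rdiv_lt_0_compat; lra).
  assert (Htt : 3 * (t * t) = m * m).
  { unfold t.
    replace (3 * (m / sqrt 3 * (m / sqrt 3))) with (3 * (m * m) / (sqrt 3 * sqrt 3)) by (field; lra).
    rewrite Hs3sq. field. }
  assert (Ht4 : t <= 1/4) by nra.
  replace (2 / sqrt 3 * (m / 2)) with t by (unfold t; field; lra).
  destruct (classic (exists a', In a' P /\ t <= sq_x a' <= 1 - t /\ t <= sq_y a' <= 1 - t))
    as [(a' & Ha' & Hx & Hy)|Hboundary].
  - apply (square_circle_escape P a' t); auto.
    intros p q Hp Hq Hpq. pose proof (Hmin p q Hp Hq Hpq). rewrite Htt.
    apply Rmult_le_compat; lra.
  - (* all of [P] lies within [t] of the boundary, so the centre is far from [P] *)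
    assert (Hc : 0 <= 1/2 <= 1) by lra.
    exists (sq_point _ _ Hc Hc). apply dist_set_ge; [intros ->; destruct Ha|].
    intros s Hs. apply Rsqr_incr_0_var; [|apply sqrt_pos]. unfold Rsqr. rewrite euclid_sq_sqr.
    change (sq_x (sq_point _ _ Hc Hc)) with (1/2). change (sq_y (sq_point _ _ Hc Hc)) with (1/2).
    pose proof (Rle_0_sqr (1/2 - sq_x s)). pose proof (Rle_0_sqr (1/2 - sq_y s)). unfold Rsqr in *.
    destruct (not_and_or (t <= sq_x s <= 1 - t) (t <= sq_y s <= 1 - t)) as [Hx|Hy].
    + intros [Hx Hy]. apply Hboundary. eauto.
    + pose proof (near_boundary_far_from_half (sq_x s) t ltac:(lra) Hx). lra.
    + pose proof (near_boundary_far_from_half (sq_y s) t ltac:(lra) Hy). lra.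
Qed.

Section RhoSquare.
Variable k : nat.
Hypothesis Hk : (2 <= k)%nat.

Let u := sqrt (sqrt 3) * sqrt (INR k).

Let u_sqr : u * u = sqrt 3 * INR k.
Proof.
  unfold u.
  replace (_ * _) with ((sqrt (sqrt 3) * sqrt (sqrt 3)) * (sqrt (INR k) * sqrt (INR k))) by ring.
  rewrite !sqrt_sqrt; auto using sqrt_pos, pos_INR.
Qed.

Let sqrt3_bounds : 17/10 <= sqrt 3 <= 7/4 /\ sqrt 3 * sqrt 3 = 3.
Proof. pose proof (sqrt_pos 3). pose proof (sqrt_sqrt 3 ltac:(lra)). nra. Qed.

Let sqrt2_bounds : 7/5 <= sqrt 2 /\ sqrt 2 * sqrt 2 = 2.
Proof. pose proof (sqrt_pos 2). pose proof (sqrt_sqrt 2 ltac:(lra)). nra. Qed.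

Let k_ge_2 : 2 <= INR k.
Proof. apply (le_INR 2). exact Hk. Qed.

Let sqrt2_lt_u : sqrt 2 < u.
Proof.
  pose proof sqrt3_bounds. pose proof sqrt2_bounds. pose proof k_ge_2.
  assert (0 <= u) by (unfold u; apply Rmult_le_pos; apply sqrt_pos). nra.
Qed.

Let rho_square_eq : rho_square k = sqrt 3 * u / (u - sqrt 2).
Proof.
  destruct sqrt3_bounds as [Hs3 Hs3sq].
  assert (H27 : sqrt 27 = 3 * sqrt 3) by (apply sqrt_lem_1; nra).
  assert (H27' : sqrt (sqrt 27) = sqrt 3 * sqrt (sqrt 3)).
  { pose proof (sqrt_pos (sqrt 3)). pose proof (sqrt_sqrt (sqrt 3) ltac:(lra)).
    apply sqrt_lem_1; [apply sqrt_pos|nra|nra]. }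
  unfold rho_square. rewrite H27'.
  replace (sqrt 3 * sqrt (sqrt 3) * sqrt (INR k)) with (sqrt 3 * u) by (unfold u; ring).
  reflexivity.
Qed.

Lemma rho_square_ge_sqrt3 : sqrt 3 <= rho_square k.
Proof.
  rewrite rho_square_eq. pose proof sqrt2_lt_u. pose proof (sqrt_pos 2). pose proof (sqrt_pos 3).
  apply Rmult_le_reg_r with (u - sqrt 2); [lra|].
  unfold Rdiv. rewrite Rmult_assoc, Rinv_l by lra. nra.
Qed.

Lemma rho_square_pos : 0 < rho_square k.
Proof. pose proof rho_square_ge_sqrt3. pose proof sqrt3_bounds. lra. Qed.

Lemma rho_square_mul_2_div_sqrt3_ge_2 : 2 <= rho_square k * (2 / sqrt 3).
Proof.
  pose proof rho_square_ge_sqrt3. destruct sqrt3_bounds as [Hs3 _].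
  replace 2 with (sqrt 3 * (2 / sqrt 3)) at 1 by (field; lra).
  apply Rmult_le_compat_r; auto. apply Rlt_le, Rdiv_lt_0_compat; lra.
Qed.

Lemma rho_square_ge_2 : (k <= 16)%nat -> 2 <= rho_square k.
Proof.
  intros Hk16. apply (le_INR k 16) in Hk16. simpl in Hk16.
  rewrite rho_square_eq.
  pose proof sqrt2_lt_u. pose proof sqrt3_bounds. pose proof sqrt2_bounds. pose proof u_sqr.
  apply Rmult_le_reg_r with (u - sqrt 2); [lra|].
  unfold Rdiv. rewrite Rmult_assoc, Rinv_l by lra. nra.
Qed.

End RhoSquare.

Section Walks.
Context {V : Type} (adj : V -> V -> Prop).

Lemma walk_snoc n u w v : walk adj n u w -> adj w v -> walk adj (S n) u v.
Proof. induction 1; intros Hwv; econstructor; eauto using walk_nil. Qed.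

Lemma walk_rev n u v : (forall x y, adj x y -> adj y x) -> walk adj n u v -> walk adj n v u.
Proof. intros Hsym. induction 1; [constructor|eauto using walk_snoc]. Qed.

Lemma walk_app n m u v w : walk adj n u v -> walk adj m v w -> walk adj (n + m) u w.
Proof. induction 1; intros Hvw; simpl; [auto|econstructor; eauto]. Qed.

Lemma walk_split n u v h : walk adj n u v -> (h <= n)%nat ->
  exists w, walk adj h u w /\ walk adj (n - h) w v.
Proof.
  intros Hw. revert h. induction Hw as [v|n u w v Huw Hw IH]; intros h Hh.
  - exists v. replace h with 0%nat by lia. split; constructor.
  - destruct h as [|h].
    + exists u. split; [constructor|econstructor; eauto].
    + destruct (IH h ltac:(lia)) as [x [Hux Hxv]].
      exists x. split; [econstructor; eauto|exact Hxv].
Qed.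

Lemma walk_0_eq u v : walk adj 0 u v -> u = v.
Proof. now inversion 1. Qed.

End Walks.

Section ShortestPathMetric.
Context {V : Type} (adj : V -> V -> Prop) (d : V -> V -> R).
Hypothesis Hsym : forall x y, adj x y -> adj y x.
Hypothesis Hsp : shortest_path_metric adj d.

Lemma shortest_path_le n u v : walk adj n u v -> d u v <= INR n.
Proof. intros Hw. destruct (Hsp u v) as [m [_ [Hmin ->]]]. apply le_INR. auto. Qed.

Lemma shortest_path_is_metric : is_metric d.
Proof.
  split; [|split; [|split]].
  - intros x y. destruct (Hsp x y) as [n [_ [_ ->]]]. apply pos_INR.
  - intros x y. split.
    + destruct (Hsp x y) as [n [Hw [_ ->]]]. intros Hn.
      replace n with 0%nat in Hw by (apply INR_eq; auto). now apply walk_0_eq in Hw.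
    + intros <-. destruct (Hsp x x) as [n [_ [Hmin ->]]].
      specialize (Hmin 0%nat (walk_nil adj x)). replace n with 0%nat by lia. reflexivity.
  - intros x y. apply Rle_antisym.
    + destruct (Hsp y x) as [n [Hw [_ ->]]]. apply shortest_path_le, walk_rev; auto.
    + destruct (Hsp x y) as [n [Hw [_ ->]]]. apply shortest_path_le, walk_rev; auto.
  - intros x y z. destruct (Hsp x y) as [n [Hxy [_ ->]]]. destruct (Hsp y z) as [m [Hyz [_ ->]]].
    rewrite <- plus_INR. apply shortest_path_le. eapply walk_app; eauto.
Qed.

Lemma shortest_path_ge_1 x y : x <> y -> 1 <= d x y.
Proof.
  destruct (Hsp x y) as [[|n] [Hw [_ ->]]]; intros Hxy.
  - apply walk_0_eq in Hw. contradiction.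
  - rewrite S_INR. pose proof (pos_INR n). lra.
Qed.

Lemma graph_gap_ratio_ge_2_3 P : NoDup P -> (2 <= length P)%nat -> (exists v, ~ In v P) ->
  Rbar_le (Finite (2 / 3)) (gap_ratio d P).
Proof.
  intros HP Hlen [w Hw_out]. pose proof shortest_path_is_metric as Hd.
  apply (gap_ratio_ge_of_far_point d Hd); auto.
  intros a b Ha Hb Hab Hmin.
  assert (HPnil : P <> nil) by (intros ->; destruct Ha).
  destruct (Hsp a b) as [n [Hw [_ Hn]]].
  destruct (Nat.le_gt_cases n 1) as [Hn1|Hn2].
  - exists w. apply dist_set_ge; auto. intros s Hs.
    assert (w <> s) by (intros ->; contradiction).
    pose proof (shortest_path_ge_1 w s H). apply le_INR in Hn1. simpl in Hn1. lra.
  - (* a vertex [h] steps along a shortest a-b walk, with [n/3 <= h <= n/2] *)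
    assert (exists h, (2 * h <= n <= 3 * h)%nat) as [h Hh].
    { destruct (Nat.Even_or_Odd n) as [[h ->]|[h ->]]; exists h; lia. }
    destruct (walk_split adj n a b h Hw ltac:(lia)) as [v [Hav Hvb]].
    apply shortest_path_le in Hav, Hvb. rewrite minus_INR in Hvb by lia.
    assert (H3h : INR n <= 3 * INR h).
    { replace 3 with (INR 3) by (simpl; lra). rewrite <- mult_INR. apply le_INR. lia. }
    assert (H2h : 2 * INR h <= INR n).
    { replace 2 with (INR 2) by (simpl; lra). rewrite <- mult_INR. apply le_INR. lia. }
    exists v. apply dist_set_ge; auto. intros s Hs. rewrite Hn.
    destruct (classic (s = a)) as [->|Hsa].
    + pose proof (metric_triangle d Hd a v b). rewrite (metric_sym d Hd v a). lra.
    + pose proof (Hmin a s Ha Hs (not_eq_sym Hsa)). pose proof (metric_triangle d Hd a v s). lra.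
Qed.

End ShortestPathMetric.

Theorem corollary1 :
  (* (i) continuous (compact, path connected) metric spaces: rho = 2 *)
  (forall (T : Type) (d : T -> T -> R),
     is_metric d -> compact_space d -> path_connected_space d ->
     forall (k : nat) (q : nat -> T),
       (2 <= k)%nat -> lt_card_if_finite T k -> farthest_insertion d k q ->
       Rbar_le (gap_ratio d (prefix_set q k))
               (Rbar_mult (Finite 2) (opt_gap_ratio d k))) /\
  (* (ii) the unit square with the Euclidean metric: rho = rho(k) *)
  (forall (k : nat) (q : nat -> unit_square),
     (2 <= k)%nat -> farthest_insertion euclid_sq k q ->
     Rbar_le (gap_ratio euclid_sq (prefix_set q k))
             (Rbar_mult (Finite (rho_square k)) (opt_gap_ratio euclid_sq k))) /\
  (* (iii) vertex set of a connected graph with the shortest-path metric: rho = 3 *)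
  (forall (V : Type) (adj : V -> V -> Prop) (d : V -> V -> R),
     finite_simple_graph adj -> connected_graph adj -> shortest_path_metric adj d ->
     forall (k : nat) (q : nat -> V),
       (2 <= k)%nat -> lt_card_if_finite V k -> farthest_insertion d k q ->
       Rbar_le (gap_ratio d (prefix_set q k))
               (Rbar_mult (Finite 3) (opt_gap_ratio d k))).
Proof.
  split; [|split].
  - intros T d Hd _ Hpc k q Hk Hcard Hfi.
    apply (gap_ratio_le_mult_opt_gap_ratio d k _ 2 1 2); try lra.
    + exact (farthest_insertion_gap_ratio_le_2 d Hd k q Hk Hfi Hcard).
    + intros P HP Hlen. apply (path_connected_gap_ratio_ge_1 d Hd Hpc); [auto|lia].
  - intros k q Hk Hfi.
    pose proof (farthest_insertion_gap_ratio_le_2 _ euclid_sq_is_metric k q Hk Hfi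
                  (unit_square_infinite k)) as HS.
    pose proof (rho_square_pos k Hk) as Hrho.
    destruct (Compare_dec.le_lt_dec k 16) as [Hsmall|Hlarge].
    + apply (gap_ratio_le_mult_opt_gap_ratio _ k _ 2 1); auto.
      * intros P HP Hlen.
        apply (gap_ratio_ge_1_of_midpoints _ euclid_sq_is_metric euclid_sq_midpoints); [auto|lia].
      * rewrite Rmult_1_r. exact (rho_square_ge_2 k Hk Hsmall).
    + apply (gap_ratio_le_mult_opt_gap_ratio _ k _ 2 (2 / sqrt 3)); auto.
      * intros P HP Hlen. apply square_gap_ratio_ge_2_sqrt3; [auto|lia].
      * exact (rho_square_mul_2_div_sqrt3_ge_2 k Hk).
  - intros V adj d [_ [Hsym _]] _ Hsp k q Hk Hcard Hfi.
    pose proof (shortest_path_is_metric adj d Hsym Hsp) as Hd.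
    apply (gap_ratio_le_mult_opt_gap_ratio d k _ 2 (2 / 3) 3); try lra.
    + exact (farthest_insertion_gap_ratio_le_2 d Hd k q Hk Hfi Hcard).
    + intros P HP Hlen. apply (graph_gap_ratio_ge_2_3 adj d Hsym Hsp); [auto|lia|].
      exact (lt_card_not_In V k P Hcard Hlen).
Qed.
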